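(* Let $V$ be a simple vertex operator algebra containing a rational subVOA $W$ whose Virasoro element equals that of $V$. Then $V$ is projective as a $V$-module.
   Context: A VOA is rational if all its modules are completely reducible. $\mathrm{mod}(V)$ is the category of $\mathbb{N}$-graded $V$-modules with composition series of finite length; $P\in\mathrm{mod}(V)$ is projective if every $V$-epimorphism $X\to P$ with $X\in\mathrm{mod}(V)$ splits. *)

From HB Require Import structures.
From mathcomp Require Import all_boot all_order all_algebra.
From mathcomp Require Import complex reals.
Set Implicit Arguments.
Unset Strict Implicit.
Unset Printing Implicit Defensive.
Import Order.TTheory GRing.Theory Num.Theory.
Local Open Scope ring_scope.

Section VOADefs.
Variable C : fieldType.

Definition gbinom (m : int) (i : nat) : C :=
  (\prod_(j < i) (m%:~R - j%:R)) / (i`!)%:R.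

Section Subspaces.
Variable M : lmodType C.

Definition subspace (U : M -> Prop) : Prop :=
  U 0 /\ (forall a x y, U x -> U y -> U (a *: x + y)).

Definition direct_sum (I : eqType) (F : I -> M -> Prop) : Prop :=
  (forall w : M, exists (s : seq I) (f : I -> M),
      (forall i, i \in s -> F i (f i)) /\ w = \sum_(i <- s) f i) /\
  (forall (s : seq I) (f : I -> M), uniq s ->
      (forall i, i \in s -> F i (f i)) -> \sum_(i <- s) f i = 0 ->
      forall i, i \in s -> f i = 0).
End Subspaces.

Section Vertex.
Variables (V : lmodType C) (Y : V -> int -> V -> V) (vac om : V).
(* Y u n v = u_n v ;  L(n) = om_(n+1) *)
Definition Lop (n : int) (v : V) : V := Y om (n + 1) v.

(* Borcherds (Jacobi) identity for an action YM : V -> int -> M -> M,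
   the (finite) sums being truncated at any bound k beyond which all
   terms vanish. *)
Definition borcherds (M : lmodType C) (YM : V -> int -> M -> M)
  (u v : V) (w : M) : Prop :=
  forall (m n l : int) (k : nat),
    (forall i : nat, (k <= i)%N ->
       Y u (l + i%:Z) v = 0 /\ YM v (n + i%:Z) w = 0 /\ YM u (m + i%:Z) w = 0) ->
    \sum_(i < k) gbinom m i *: YM (Y u (l + i%:Z) v) (m + n - i%:Z) w =
    \sum_(i < k) ((-1) ^+ i * gbinom l i) *:
        (YM u (m + l - i%:Z) (YM v (n + i%:Z) w)
         - (-1) ^+ (absz l) *: YM v (n + l - i%:Z) (YM u (m + i%:Z) w)).

(* weak module for the vertex subalgebra S (S = setT gives V-modules) *)
Definition is_module (S : V -> Prop) (M : lmodType C)
  (YM : V -> int -> M -> M) : Prop :=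
  (forall u n a w w', S u -> YM u n (a *: w + w') = a *: YM u n w + YM u n w') /\
  (forall u u' n a w, S u -> S u' ->
      YM (a *: u + u') n w = a *: YM u n w + YM u' n w) /\
  (forall u w, S u -> exists N : int, forall n, N <= n -> YM u n w = 0) /\
  (forall n w, YM vac n w = if n == -1 then w else 0) /\
  (forall u v w, S u -> S v -> borcherds YM u v w).

Definition is_VOA (c : C) : Prop :=
  (forall u n a v v', Y u n (a *: v + v') = a *: Y u n v + Y u n v') /\
  (forall u u' n a v, Y (a *: u + u') n v = a *: Y u n v + Y u' n v) /\
  (forall u v, exists N : int, forall n, N <= n -> Y u n v = 0) /\
  (forall n v, Y vac n v = if n == -1 then v else 0) /\
  (forall u, Y u (-1) vac = u) /\
  (forall u (n : int), 0 <= n -> Y u n vac = 0) /\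
  (forall u v w, borcherds Y u v w) /\
  (forall (m n : int) v,
     Lop m (Lop n v) - Lop n (Lop m v) =
     (m - n)%:~R *: Lop (m + n) v +
     ((if m + n == 0 then (m ^+ 3 - m)%:~R / 12%:R else 0) * c) *: v) /\
  (forall u n v, Y (Lop (-1) u) n v = - n%:~R *: Y u (n - 1) v) /\
  (forall v, exists s : seq (int * V),
      (forall p, p \in s -> Lop 0 p.2 = p.1%:~R *: p.2) /\
      v = \sum_(p <- s) p.2) /\
  (forall n : int, exists s : seq V, forall v, Lop 0 v = n%:~R *: v ->
      exists a : nat -> C, v = \sum_(i < size s) a i *: s`_i) /\
  (exists N : int, forall (n : int) v, n < N -> Lop 0 v = n%:~R *: v -> v = 0).

Definition subVOA_same_virasoro (W : V -> Prop) : Prop :=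
  subspace W /\ W vac /\ W om /\
  (forall u v n, W u -> W v -> W (Y u n v)).

Section Modules.
Variables (S : V -> Prop) (M : lmodType C) (YM : V -> int -> M -> M).

Definition submodule (U : M -> Prop) : Prop :=
  subspace U /\ (forall u n w, S u -> U w -> U (YM u n w)).

Definition irreducible_submodule (U : M -> Prop) : Prop :=
  submodule U /\ (exists w, U w /\ w <> 0) /\
  (forall U', submodule U' -> (forall w, U' w -> U w) ->
     (forall w, U' w -> w = 0) \/ (forall w, U w -> U' w)).

(* N-gradable (admissible) module: M = (+)_{n in N} M(n) with
   u_m M(n) <= M(wt u - m - 1 + n) for homogeneous u; M(n) := 0 for n < 0 *)
Definition ngradable : Prop :=
  exists G : int -> M -> Prop,
    (forall n, subspace (G n)) /\
    (forall n w, n < 0 -> G n w -> w = 0) /\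
    direct_sum G /\
    (forall u (k m n : int) w, S u -> Lop 0 u = k%:~R *: u -> G n w ->
        G (k - m - 1 + n) (YM u m w)).

Definition completely_reducible : Prop :=
  exists (I : eqType) (F : I -> M -> Prop),
    (forall i, irreducible_submodule (F i)) /\ direct_sum F.

Definition has_composition_series : Prop :=
  exists (k : nat) (Ms : nat -> M -> Prop),
    (forall i, submodule (Ms i)) /\
    (forall w, Ms 0 w <-> w = 0) /\ (forall w, Ms k w) /\
    (forall i, (i < k)%N ->
       (forall w, Ms i w -> Ms i.+1 w) /\
       (exists w, Ms i.+1 w /\ ~ Ms i w) /\
       (forall U, submodule U -> (forall w, Ms i w -> U w) ->
          (forall w, U w -> Ms i.+1 w) ->
          (forall w, U w -> Ms i w) \/ (forall w, Ms i.+1 w -> U w))).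
End Modules.

Definition module_hom (S : V -> Prop) (M1 M2 : lmodType C)
  (Y1 : V -> int -> M1 -> M1) (Y2 : V -> int -> M2 -> M2) (f : M1 -> M2) :=
  (forall a x y, f (a *: x + y) = a *: f x + f y) /\
  (forall u n x, S u -> f (Y1 u n x) = Y2 u n (f x)).

Definition rational_VOA (W : V -> Prop) : Prop :=
  forall (M : lmodType C) (YM : V -> int -> M -> M),
    is_module W YM -> ngradable W YM -> completely_reducible W YM.

Definition simple_VOA : Prop :=
  (exists v : V, v <> 0) /\
  (forall U, submodule (fun _ => True) Y U ->
     (forall w, U w -> w = 0) \/ (forall w, U w)).

Definition setTV : V -> Prop := fun _ => True.

Definition in_modV (M : lmodType C) (YM : V -> int -> M -> M) : Prop :=
  is_module setTV YM /\ ngradable setTV YM /\ has_composition_series setTV YM.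

Definition projective_modV (P : lmodType C) (YP : V -> int -> P -> P) : Prop :=
  in_modV YP /\
  forall (X : lmodType C) (YX : V -> int -> X -> X) (f : X -> P),
    in_modV YX -> module_hom setTV YX YP f -> (forall p, exists x, f x = p) ->
    exists g : P -> X, module_hom setTV YP YX g /\ (forall p, f (g p) = p).
End Vertex.
End VOADefs.

(* Write f : X -> V for an epimorphism in mod(V).  Since W is rational, X is a
   sum of irreducible W-submodules; adding them one at a time (each one either
   meets ker f trivially in the sum or has its image already covered) yields a
   W-submodule U on which f is injective and which contains a preimage z of
   the vacuum.  As om lies in W, L(-1) z lies in U and maps to L(-1) 1 = 0, so
   L(-1) z = 0.  Translation covariance (L(-1) u)_(j+1) = -(j+1) u_j then makes
   z vacuum-like, and v |-> v_(-1) z is a V-module section of f. *)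

From HB Require Import structures.
From mathcomp Require Import all_boot all_order all_algebra.
From mathcomp Require Import complex reals.
From mathcomp Require Import zify ring.
Set Implicit Arguments.
Unset Strict Implicit.
Unset Printing Implicit Defensive.
Import GRing.Theory Num.Theory.
Local Open Scope ring_scope.

Section LinearFun.
Variables (K : fieldType) (M N : lmodType K) (phi : M -> N).
Hypothesis phi_lin : linear phi.

Let phiL : {linear M -> N} := HB.pack phi (GRing.isLinear.Build _ _ _ _ phi phi_lin).

Lemma lin0 : phi 0 = 0. Proof. exact: raddf0 phiL. Qed.
Lemma linD : {morph phi : x y / x + y}. Proof. exact: raddfD phiL. Qed.
Lemma linN : {morph phi : x / - x}. Proof. exact: raddfN phiL. Qed.
Lemma linZ a x : phi (a *: x) = a *: phi x. Proof. exact: (linearZ_LR phiL). Qed.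
Lemma lin_sum (I : Type) (s : seq I) (P : pred I) (F : I -> M) :
  phi (\sum_(i <- s | P i) F i) = \sum_(i <- s | P i) phi (F i).
Proof. exact: (raddf_sum phiL s P F). Qed.
End LinearFun.

Section Eigenspaces.
Variables (K : fieldType) (M : lmodType K) (T : M -> M).
Hypothesis T_lin : linear T.

Definition eigenspace_of (a : K) (w : M) : Prop := T w = a *: w.

Lemma subspace_eigenspace a : subspace (eigenspace_of a).
Proof.
split=> [|b x y Tx Ty]; first by rewrite /eigenspace_of lin0 ?scaler0.
by rewrite /eigenspace_of T_lin Tx Ty scalerA mulrC -scalerA scalerDr.
Qed.

Variables (I : eqType) (e : I -> K).

Lemma eigenvectors_regroup (s : seq (I * M)) :
  (forall p, p \in s -> eigenspace_of (e p.1) p.2) ->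
  exists (t : seq I) (g : I -> M),
    (forall i, eigenspace_of (e i) (g i)) /\ \sum_(p <- s) p.2 = \sum_(i <- t) g i.
Proof.
move=> s_eigen; exists (undup [seq p.1 | p <- s]).
exists (fun i => \sum_(p <- s | p.1 == i) p.2); split=> [i|].
  rewrite /eigenspace_of (lin_sum T_lin) scaler_sumr big_seq_cond [RHS]big_seq_cond.
  by apply: eq_bigr => p /andP[/s_eigen Tp /eqP <-].
under [RHS]eq_bigr do rewrite big_mkcond.
rewrite exchange_big /= big_seq [RHS]big_seq; apply: eq_bigr => p sp.
rewrite -big_mkcond -big_filter (@eq_filter _ _ (pred1 p.1)) => [|i]; last exact: eq_sym.
by rewrite filter_pred1_uniq ?undup_uniq ?mem_undup ?map_f // big_seq1.
Qed.

Hypothesis e_inj : injective e.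

Lemma eigenvectors_independent (t : seq I) (g : I -> M) : uniq t ->
  (forall i, i \in t -> eigenspace_of (e i) (g i)) ->
  \sum_(i <- t) g i = 0 -> forall i, i \in t -> g i = 0.
Proof.
elim: t g => [|j t IH] g //= /andP[jNt t_uniq] g_eigen.
rewrite big_cons => sum0.
pose g' i := (e i - e j) *: g i.
have g'_eigen i : i \in t -> eigenspace_of (e i) (g' i).
  move=> it; rewrite /eigenspace_of /g' (linZ T_lin) g_eigen ?inE ?it ?orbT //.
  by rewrite !scalerA mulrC.
have sum'0 : \sum_(i <- t) g' i = 0.
  have : T (g j + \sum_(i <- t) g i) - e j *: (g j + \sum_(i <- t) g i) = 0.
    by rewrite sum0 (lin0 T_lin) scaler0 subr0.
  rewrite (linD T_lin) (lin_sum T_lin) scalerDr scaler_sumr g_eigen ?mem_head //.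
  rewrite opprD addrACA subrr add0r -sumrB => sum_eq0; rewrite -[RHS]sum_eq0.
  rewrite big_seq [RHS]big_seq; apply: eq_bigr => i it.
  by rewrite /g' scalerBl g_eigen ?inE ?it ?orbT.
have gt0 i : i \in t -> g i = 0.
  move=> it; have /eqP := IH g' t_uniq g'_eigen sum'0 i it.
  rewrite scaler_eq0 subr_eq0 => /orP[/eqP/e_inj eij|/eqP //].
  by rewrite -eij it in jNt.
move=> i; rewrite inE => /orP[/eqP->|]; last exact: gt0.
by move: sum0; rewrite big1_seq ?addr0 // => k /andP[_ /gt0].
Qed.

Lemma direct_sum_eigenspaces :
  (forall w, exists s : seq (I * M),
     (forall p, p \in s -> eigenspace_of (e p.1) p.2) /\ w = \sum_(p <- s) p.2) ->
  direct_sum (fun i => eigenspace_of (e i)).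
Proof.
move=> eigen_span; split=> [w|]; last exact: eigenvectors_independent.
have [s [s_eigen ->]] := eigen_span w.
have [t [g [g_eigen ->]]] := eigenvectors_regroup s_eigen.
by exists t, g.
Qed.
End Eigenspaces.

Section GeneralizedBinomial.
Variable C : numFieldType.

Lemma gbinom0 (m : int) : gbinom C m 0 = 1.
Proof. by rewrite /gbinom big_ord0 fact0 divr1. Qed.

Lemma gbinomS (m : int) (i : nat) :
  gbinom C m i.+1 = gbinom C m i * (m%:~R - i%:R) / i.+1%:R.
Proof. by rewrite /gbinom big_ord_recr /= factS natrM invfM; ring. Qed.

Lemma gbinom_small (m i : nat) : (m < i)%N -> gbinom C m i = 0.
Proof.
move=> lt_m_i; rewrite /gbinom (bigD1 (Ordinal lt_m_i)) //= subrr.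
by rewrite !mul0r.
Qed.

Lemma gbinomN2 (i : nat) : gbinom C (-2) i = (-1) ^+ i * i.+1%:R.
Proof.
elim: i => [|i IH]; first by rewrite gbinom0 mul1r.
rewrite gbinomS IH exprS -[(-2)%:~R]/(- 2 : C) -[i.+1%:R]natr1 -addn2 natrD.
by field; rewrite natr1 pnatr_eq0.
Qed.
End GeneralizedBinomial.

Section InjectiveLift.
Variables (C : fieldType) (V : lmodType C) (Y : V -> int -> V -> V).
Variables (S : V -> Prop) (X : lmodType C) (YX : V -> int -> X -> X).
Hypothesis YX_linear : forall u n, S u -> linear (YX u n).
Variable f : X -> V.
Hypothesis f_hom : module_hom S YX Y f.

Definition trivial_kernel_on (U : X -> Prop) : Prop :=
  forall x, U x -> f x = 0 -> x = 0.

Definition sum_pred (U1 U2 : X -> Prop) (x : X) : Prop :=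
  exists x1 x2, U1 x1 /\ U2 x2 /\ x = x1 + x2.

Lemma submodule0 : submodule S YX (fun x => x = 0).
Proof.
split=> [|u n x Su ->]; last exact: (lin0 (YX_linear n Su)).
by split=> // a x y -> ->; rewrite scaler0 addr0.
Qed.

Lemma submodule_sum U1 U2 :
  submodule S YX U1 -> submodule S YX U2 -> submodule S YX (sum_pred U1 U2).
Proof.
move=> [[U1_0 U1_lin] U1_Y] [[U2_0 U2_lin] U2_Y]; split; first split.
- by exists 0, 0; rewrite addr0.
- move=> a _ _ [x1 [x2 [U1x1 [U2x2 ->]]]] [y1 [y2 [U1y1 [U2y2 ->]]]].
  exists (a *: x1 + y1), (a *: x2 + y2); do !split; [exact: U1_lin | exact: U2_lin |].
  by rewrite scalerDr addrACA.
- move=> u n _ Su [x1 [x2 [U1x1 [U2x2 ->]]]].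
  exists (YX u n x1), (YX u n x2); do !split; [exact: U1_Y | exact: U2_Y |].
  exact: (linD (YX_linear n Su)).
Qed.

Lemma extend_injective_submodule U F y :
  submodule S YX U -> trivial_kernel_on U -> irreducible_submodule S YX F -> F y ->
  exists U', [/\ submodule S YX U', trivial_kernel_on U', (forall x, U x -> U' x) &
    exists x, U' x /\ f x = f y].
Proof.
move=> U_sub U_inj [F_sub [_ F_irr]] Fy.
have [[[U0 U_lin] U_Y] [[F0 F_lin] F_Y]] := (U_sub, F_sub).
have [f_lin f_Y] := f_hom.
pose F' x := F x /\ exists x', U x' /\ f x = f x'.
have F'_sub : submodule S YX F'.
  split; first split.
  - by split=> //; exists 0.
  - move=> a x1 x2 [Fx1 [x1' [Ux1' fx1]]] [Fx2 [x2' [Ux2' fx2]]].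
    split; first exact: F_lin.
    by exists (a *: x1' + x2'); split; [exact: U_lin | rewrite !f_lin fx1 fx2].
  - move=> u n x Su [Fx [x' [Ux' fx]]]; split; first exact: F_Y.
    by exists (YX u n x'); split; [exact: U_Y | rewrite !f_Y // fx].
case: (F_irr F' F'_sub (fun x => @proj1 _ _)) => [F'0 | F'_all].
  (* [f] is injective on [U + F]: a kernel element [x1 + x2] has [x2] in [F' = 0]. *)
  exists (sum_pred U F); split=> [||x Ux|].
  - exact: submodule_sum.
  - move=> _ [x1 [x2 [Ux1 [Fx2 ->]]]] /eqP; rewrite (linD f_lin) addr_eq0 => /eqP fx1.
    have x2_0 : x2 = 0.
      apply: F'0; split=> //; exists (- x1); split; last by rewrite (linN f_lin) fx1 opprK.
      by have := U_lin (-1) x1 0 Ux1 U0; rewrite addr0 scaleN1r.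
    rewrite x2_0 addr0; apply: U_inj => //.
    by rewrite fx1 x2_0 (lin0 f_lin) oppr0.
  - by exists x, 0; rewrite addr0.
  - by exists y; split=> //; exists 0, y; rewrite add0r.
have [_ [x [Ux fx]]] := F'_all y Fy.
by exists U; split=> //; exists x.
Qed.

Lemma injective_lift (I : eqType) (F : I -> X -> Prop) (s : seq I) (h : I -> X) :
  (forall i, irreducible_submodule S YX (F i)) -> (forall i, i \in s -> F i (h i)) ->
  exists U z, [/\ submodule S YX U, trivial_kernel_on U, U z &
    f z = f (\sum_(i <- s) h i)].
Proof.
move=> F_irr; elim: s => [_|i s IH Fh].
  exists (fun x => x = 0), 0; split=> //; first exact: submodule0.
  by rewrite big_nil.
have [|U [z [U_sub U_inj Uz fz]]] := IH; first by move=> j sj; apply: Fh; rewrite inE sj orbT.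
have [U' [U'_sub U'_inj UU' [x [U'x fx]]]] :=
  extend_injective_submodule U_sub U_inj (F_irr i) (Fh i (mem_head i s)).
have [f_lin _] := f_hom.
exists U', (x + z); split=> //.
  by have := (proj2 (proj1 U'_sub)) 1 x z U'x (UU' z Uz); rewrite scale1r.
by rewrite big_cons !(linD f_lin) fx fz.
Qed.
End InjectiveLift.

Section VertexOperatorAlgebra.
Variables (C : numFieldType) (V : lmodType C) (Y : V -> int -> V -> V).
Variables (vac om : V) (c : C).
Hypothesis HV : is_VOA Y vac om c.

Lemma Y_linear u n : linear (Y u n).
Proof. by case: HV => H _ a x y; apply: H. Qed.
Lemma Y_linear_left n v : linear (fun u => Y u n v).
Proof. by case: HV => _ [H _] a x y; apply: H. Qed.
Lemma Y_trunc u v : exists N : int, forall n, N <= n -> Y u n v = 0.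
Proof. by case: HV => _ [_ [H _]]. Qed.
Lemma Y_creation u : Y u (-1) vac = u.
Proof. by case: HV => _ [_ [_ [_ [H _]]]]. Qed.
Lemma Y_creation0 u (n : int) : 0 <= n -> Y u n vac = 0.
Proof. by case: HV => _ [_ [_ [_ [_ [H _]]]]]; apply: H. Qed.
Lemma Y_L_1 u n v : Y (Lop Y om (-1) u) n v = - n%:~R *: Y u (n - 1) v.
Proof. by case: HV => _ [_ [_ [_ [_ [_ [_ [_ [H _]]]]]]]]. Qed.
Lemma Y_L0_decomposition v : exists s : seq (int * V),
  (forall p, p \in s -> Lop Y om 0 p.2 = p.1%:~R *: p.2) /\ v = \sum_(p <- s) p.2.
Proof. by case: HV => _ [_ [_ [_ [_ [_ [_ [_ [_ [H _]]]]]]]]]. Qed.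
Lemma Y_L0_bounded_below :
  exists N : int, forall (n : int) v, n < N -> Lop Y om 0 v = n%:~R *: v -> v = 0.
Proof. by case: HV => _ [_ [_ [_ [_ [_ [_ [_ [_ [_ [_ H]]]]]]]]]]. Qed.

Lemma V_is_module : is_module Y vac (@setTV _ V) Y.
Proof.
case: HV => [lin [linl [trunc [vacuum [_ [_ [jacobi _]]]]]]].
split=> [u n a v v' _|]; first exact: lin.
split=> [u u' n a v _ _|]; first exact: linl.
by split=> [u v _|]; [exact: trunc | split=> [|u v w _ _]; [exact: vacuum | exact: jacobi]].
Qed.

Lemma L_1_vacuum u : Y om 0 u = Y u (-2) vac.
Proof.
have := Y_L_1 u (-1) vac; rewrite Y_creation -[Lop Y om (-1) u]/(Y om 0 u) => ->.
by rewrite -[-1 - 1]/(-2 : int) mulrNz mulr1z opprK scale1r.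
Qed.

Section Module.
Variables (M : lmodType C) (YM : V -> int -> M -> M).
Hypothesis HM : is_module Y vac (@setTV _ V) YM.

Lemma YM_linear u n : linear (YM u n).
Proof. by case: HM => H _ a w w'; apply: H. Qed.
Lemma YM_linear_left n w : linear (fun u => YM u n w).
Proof. by case: HM => _ [H _] a u u'; apply: H. Qed.
Lemma YM_trunc u w : exists N : int, forall n, N <= n -> YM u n w = 0.
Proof. by case: HM => _ [_ [H _]]; apply: H. Qed.
Lemma YM_vacuum n w : YM vac n w = if n == -1 then w else 0.
Proof. by case: HM => _ [_ [_ [H _]]]. Qed.
Lemma YM0 u n : YM u n 0 = 0.
Proof. exact: lin0 (YM_linear u n). Qed.

Lemma is_module_restrict S : is_module Y vac S YM.
Proof.
case: HM => [lin [linl [trunc [vacuum jacobi]]]].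
split=> [u n a w w' _|]; first exact: lin u n a w w' I.
split=> [u u' n a w _ _|]; first exact: linl u u' n a w I I.
split=> [u w _|]; first exact: trunc u w I.
by split=> [|u v w _ _]; [exact: vacuum | exact: jacobi u v w I I].
Qed.

Lemma borcherds_sum_large u v w m n l : exists k0 : nat, forall k, (k0 <= k)%N ->
  \sum_(i < k) gbinom C m i *: YM (Y u (l + i%:Z) v) (m + n - i%:Z) w =
  \sum_(i < k) ((-1) ^+ i * gbinom C l i) *:
      (YM u (m + l - i%:Z) (YM v (n + i%:Z) w)
       - (-1) ^+ (absz l) *: YM v (n + l - i%:Z) (YM u (m + i%:Z) w)).
Proof.
have [N1 H1] := Y_trunc u v; have [N2 H2] := YM_trunc v w.
have [N3 H3] := YM_trunc u w.
exists (absz (N1 - l) + absz (N2 - n) + absz (N3 - m))%N => k k0k.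
case: HM => _ [_ [_ [_ jacobi]]]; apply: jacobi => // i ki.
by split; [apply: H1 | split; [apply: H2 | apply: H3]]; lia.
Qed.

Lemma commutator_formula (m : nat) (n : int) u v w :
  YM u m (YM v n w) - YM v n (YM u m w) =
  \sum_(i < m.+1) gbinom C m i *: YM (Y u i v) (m%:Z + n - i%:Z) w.
Proof.
have [k0 Hk] := borcherds_sum_large u v w m n 0.
have := Hk (maxn k0 m).+1 ltac:(lia).
rewrite [X in _ = X]big_ord_recl [X in _ = _ + X]big1 => [|i _]; last first.
  by rewrite gbinom_small // mulr0 scale0r.
rewrite gbinom0 !expr0 mulr1 !scale1r !addr0 => <-.
have m_le : (m.+1 <= (maxn k0 m).+1)%N by rewrite ltnS leq_maxr.
rewrite (big_ord_widen _ (fun i : nat => gbinom C m i *: YM (Y u i v) (m%:Z + n - i%:Z) w)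
  m_le) [RHS]big_mkcond; apply: eq_bigr => i _.
rewrite add0r; case: ifP => // /negbT; rewrite -leqNgt => /gbinom_small ->.
by rewrite scale0r.
Qed.

Lemma associator_formula u v w (l n : int) : exists k0 : nat, forall k,
  (k0 <= k)%N ->
  YM (Y u l v) n w =
  \sum_(i < k) ((-1) ^+ i * gbinom C l i) *:
      (YM u (l - i%:Z) (YM v (n + i%:Z) w)
       - (-1) ^+ (absz l) *: YM v (n + l - i%:Z) (YM u i w)).
Proof.
have [k0 Hk] := borcherds_sum_large u v w 0 n l; exists k0.+1 => [[|k]] // k0k.
have := Hk k.+1 (ltnW k0k); rewrite big_ord_recl big1 => [|i _]; last first.
  by rewrite gbinom_small ?scale0r.
rewrite gbinom0 scale1r !addr0 add0r => ->.
by apply: eq_bigr => i _; rewrite !add0r.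
Qed.

Lemma YM_L_1 u (j : nat) w : YM (Y om 0 u) j.+1 w = - j.+1%:R *: YM u j w.
Proof.
(* In the associator formula for (u_(-2) 1)_(j+1), only the term i = j survives. *)
have [k0 Hk] := associator_formula u vac w (-2) j.+1.
have jk : (j < (maxn k0 j).+1)%N by rewrite ltnS leq_maxr.
rewrite L_1_vacuum (Hk _ (leqW (leq_maxl k0 j))) (bigD1 (Ordinal jk)) //=.
rewrite big1 => [|i /eqP ij]; last first.
  rewrite !YM_vacuum; case: eqP => [?|_]; first lia.
  rewrite YM0; case: eqP => [eq_ij|_]; last by rewrite scaler0 subrr scaler0.
  by case: ij; apply: val_inj => /=; lia.
rewrite !YM_vacuum; case: eqP => [?|_]; first lia.
case: eqP => [_|?]; last lia.
rewrite YM0 gbinomN2 addr0 add0r sqrrN expr1n scale1r scalerN -scaleNr.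
by rewrite mulrA -expr2 -exprM mulnC exprM sqrrN !expr1n mul1r.
Qed.

Definition vacuum_like (x : M) : Prop := forall u (j : nat), YM u j x = 0.

Lemma vacuum_like_of_L_1 x : YM om 0 x = 0 -> vacuum_like x.
Proof.
(* Downward induction from the truncation bound, as
   (L(-1) u)_(j+1) x = [L(-1), u_(j+1)] x. *)
move=> L_1x u; have [N HN] := YM_trunc u x.
suff mode0 d (j : nat) : (absz N <= j + d)%N -> YM u j x = 0.
  by move=> j; apply: (mode0 (absz N)); lia.
elim: d j => [|d IH] j jd; first by apply: HN; lia.
have := commutator_formula 0 j.+1 om u x.
rewrite L_1x YM0 IH ?YM0 ?subr0; last lia.
rewrite big_ord1 gbinom0 scale1r /= add0r subr0 YM_L_1 => /esym/eqP.
by rewrite scaler_eq0 oppr_eq0 pnatr_eq0 => /eqP.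
Qed.

Lemma vacuum_like_hom x : vacuum_like x ->
  module_hom (@setTV _ V) Y YM (fun v => YM v (-1) x).
Proof.
move=> x_vac; split=> [|u l v _]; first exact: YM_linear_left.
have [k0 Hk] := associator_formula u v x l (-1).
rewrite (Hk k0.+1 (leqnSn _)) big_ord_recl big1 => [|i _]; last first.
  have -> : -1 + (lift ord0 i)%:Z = i by rewrite /= /bump /=; lia.
  by rewrite !x_vac !YM0 scaler0 subrr scaler0.
by rewrite x_vac YM0 scaler0 subr0 addr0 expr0 gbinom0 mulr1 scale1r /= subr0 addr0.
Qed.
End Module.

Lemma L0_Y_homogeneous u (k m : int) w : Lop Y om 0 u = k%:~R *: u ->
  Lop Y om 0 (Y u m w) = Y u m (Lop Y om 0 w) + (k - m - 1)%:~R *: Y u m w.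
Proof.
(* Recall L(-1) = om_0 and L(0) = om_1; use the commutator formula for om_1. *)
move=> L0u; have := commutator_formula V_is_module 1 m om u w.
rewrite !big_ord_recr big_ord0 /= add0r gbinom0 gbinomS gbinom0 mul1r subr0 divr1.
rewrite -[Y om 0 u]/(Lop Y om (-1) u) Y_L_1 -[Y om 1 u]/(Lop Y om 0 u) L0u.
have -> : Posz 1 + m - 1 = m by lia.
rewrite (linZ (Y_linear_left _ _)) !scalerA -scalerDl => comm.
rewrite -[Lop Y om 0 _]/(Y om 1 _) -[Lop Y om 0 w]/(Y om 1 w).
rewrite -[LHS](subrK (Y u m (Y om 1 w))) comm addrC; congr (_ + (_ *: _)).
by rewrite !intrD !intrN !mulr1z ?mulr0n; ring.
Qed.

Lemma V_ngradable : ngradable Y om (@setTV _ V) Y.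
Proof.
have [N0 V_bounded] := Y_L0_bounded_below.
have L0_lin : linear (Lop Y om 0) by apply: Y_linear.
pose wt n := (n + N0)%:~R : C.
have wt_inj : injective wt by move=> n n' /intr_inj/addIr.
exists (fun n => eigenspace_of (Lop Y om 0) (wt n)); split.
  by move=> n; apply: subspace_eigenspace.
split=> [n w n_lt0|]; first by apply: V_bounded; lia.
split.
  apply: direct_sum_eigenspaces => // w.
  have [s [s_eigen ->]] := Y_L0_decomposition w.
  exists [seq (p.1 - N0, p.2) | p <- s]; rewrite big_map; split=> // _ /mapP[p sp ->].
  by rewrite /eigenspace_of /wt /= subrK; apply: s_eigen.
move=> u k m n w _ L0u L0w; rewrite /eigenspace_of (L0_Y_homogeneous m w L0u) L0w.
rewrite (linZ (Y_linear u m)) -scalerDl /wt -intrD; congr (_%:~R *: _); lia.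
Qed.

Lemma V_composition_series : simple_VOA Y -> has_composition_series (@setTV _ V) Y.
Proof.
move=> [[v v_neq0] V_simple].
exists 1%N, (fun i w => if i == 0%N then w = 0 else True); split.
  case=> [|i] /=; last by do !split.
  split=> [|u n w _ ->]; last exact: lin0 (Y_linear u n).
  by split=> // a x y -> ->; rewrite scaler0 addr0.
do 2!split=> //; case=> // _; split=> //; split; first by exists v.
by move=> U U_sub _ _; case: (V_simple U U_sub) => U_triv; [left | right] => w /=; auto.
Qed.

Lemma V_in_modV : simple_VOA Y -> in_modV Y vac om Y.
Proof.
by move=> V_simple; split; [exact: V_is_module | split; [exact: V_ngradable |
  exact: V_composition_series]].
Qed.

Lemma epimorphism_vacuum_preimage (W : V -> Prop) (X : lmodType C)
    (YX : V -> int -> X -> X) (f : X -> V) :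
  subVOA_same_virasoro Y vac om W -> rational_VOA Y vac om W -> in_modV Y vac om YX ->
  module_hom (@setTV _ V) YX Y f -> (forall v, exists x, f x = v) ->
  exists z, f z = vac /\ YX om 0 z = 0.
Proof.
move=> [_ [_ [W_om _]]] W_rational [X_mod [X_grad _]] [f_lin f_Y] f_onto.
have X_W_grad : ngradable Y om W YX.
  case: X_grad => G [G_sub [G_neg [G_sum G_Y]]].
  by exists G; do 3!split=> //; move=> u k m n w _; apply: G_Y.
have f_W_hom : module_hom W YX Y f by split=> // u n x _; apply: f_Y.
have [J [F [F_irr [F_span _]]]] :=
  W_rational X YX (is_module_restrict X_mod W) X_W_grad.
have [x0 fx0] := f_onto vac; have [s [h [Fh x0E]]] := F_span x0.
have [U [z [[_ U_Y] U_inj Uz fz]]] :=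
  injective_lift (fun u n _ => YM_linear X_mod u n) f_W_hom F_irr Fh.
rewrite -x0E fx0 in fz; exists z; split=> //.
by apply: U_inj; [exact: U_Y | rewrite f_Y // fz Y_creation0].
Qed.
End VertexOperatorAlgebra.

Theorem theorem13 (R : realType) (V : lmodType R[i])
    (Y : V -> int -> V -> V) (vac om : V) (c : R[i]) (W : V -> Prop) :
  is_VOA Y vac om c -> simple_VOA Y ->
  subVOA_same_virasoro Y vac om W -> rational_VOA Y vac om W ->
  projective_modV Y vac om Y.
Proof.
move=> HV V_simple W_sub W_rational; split; first exact: (V_in_modV HV V_simple).
move=> X YX f X_mod f_hom f_onto.
have [z [fz L_1z]] := epimorphism_vacuum_preimage HV W_sub W_rational X_mod f_hom f_onto.
exists (fun v => YX v (-1) z); split.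
  exact: (vacuum_like_hom HV X_mod.1 (vacuum_like_of_L_1 HV X_mod.1 L_1z)).
by move=> v; rewrite (proj2 f_hom) // fz (Y_creation HV).
Qed.
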